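(* Work in the projective model of $\mathbf{Nil}$ geometry described in the context. Let $P_1=(1,0,0,0)$, $P_2=(1,a,b,c)$ and $P_3=(1,d,e,f)$ with $ae-bd\neq0$. Then the translation-like triangular surface $S^{\mathbf{Nil},t}_{P_1,P_2,P_3}$ has the equation \[ z=\frac{xy}{2}+\frac{bde-abe+2ce-2bf}{2(ae-bd)}\,x+\frac{abd-ade+2af-2cd}{2(ae-bd)}\,y . \]
   Context: $\mathbf{Nil}$ is modelled on $\mathbb{R}^3$ with points in homogeneous coordinates $(1,x,y,z)$. For $Q=(1,q_1,q_2,q_3)$ the translation $\mathbf{T}_Q$ acts on row vectors from the right by $\begin{pmatrix}1&q_1&q_2&q_3\\0&1&0&0\\0&0&1&q_1\\0&0&0&1\end{pmatrix}$, i.e. $(1,a,b,c)\mapsto(1,q_1+a,q_2+b,q_3+bq_1+c)$, mapping $E_0=(1,0,0,0)$ to $Q$. A translation curve from $E_0$ with unit initial tangent $(u,v,w)$ is $x(t)=ut,\ y(t)=vt,\ z(t)=\frac12uvt^2+wt$; translation curves from $Q$ are their $\mathbf{T}_Q$-images. The translation-like triangular surface $S^{\mathbf{Nil},t}_{P_1,P_2,P_3}$ is the set of points $P$ such that the tangent vectors at $P$ of the translation curves from $P$ to $P_1$, $P_2$, $P_3$ are coplanar; equivalently, pulling back by $\mathbf{T}_P^{-1}$, such that the initial tangent vectors at $E_0$ of the translation curves from $E_0$ to $\mathbf{T}_P^{-1}(P_1),\mathbf{T}_P^{-1}(P_2),\mathbf{T}_P^{-1}(P_3)$ are linearly dependent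 (for a point $(1,x,y,z)$ a nonzero multiple of this initial tangent is $(x,y,z-\frac{xy}{2})$). *)

(* Nil geometry in the projective model: a point (1,x,y,z)
   is represented by its affine coordinates (x,y,z) : R * R * R. *)
From mathcomp Require Import all_boot all_order all_algebra.
Set Implicit Arguments. Unset Strict Implicit. Unset Printing Implicit Defensive.
Import Order.TTheory GRing.Theory Num.Theory.
Local Open Scope ring_scope.

Definition nilpt (R : Type) := (R * R * R)%type.

Section Nil.
Variable R : realFieldType.

Definition px (P : nilpt R) : R := P.1.1.
Definition py (P : nilpt R) : R := P.1.2.
Definition pz (P : nilpt R) : R := P.2.

Definition nil_transl (Q A : nilpt R) : nilpt R :=
  (px Q + px A, py Q + py A, pz Q + py A * px Q + pz A).

Definition nil_transl_inv (Q A : nilpt R) : nilpt R :=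
  (px A - px Q, py A - py Q, pz A - pz Q - px Q * (py A - py Q)).

(* A nonzero multiple of the initial tangent vector at E0 of the translation
   curve from E0 = (1,0,0,0) to the point (1,x,y,z): (x, y, z - x y / 2).
   (It is the zero vector exactly when the point is E0.) *)
Definition transl_tangent (A : nilpt R) : R * R * R :=
  (px A, py A, pz A - px A * py A / 2).

Definition lin_dep3 (u v w : R * R * R) : Prop :=
  exists l1 l2 l3 : R, (l1, l2, l3) <> (0, 0, 0) /\
    l1 * u.1.1 + l2 * v.1.1 + l3 * w.1.1 = 0 /\
    l1 * u.1.2 + l2 * v.1.2 + l3 * w.1.2 = 0 /\
    l1 * u.2   + l2 * v.2   + l3 * w.2   = 0.

(* The translation-like triangular surface S^{Nil,t}_{P1,P2,P3}: points P such
   that the initial tangents (pulled back by T_P^{-1}) of the translation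
   curves from P to P1, P2, P3 are linearly dependent. *)
Definition transl_tri_surface (P1 P2 P3 : nilpt R) : nilpt R -> Prop :=
  fun P => lin_dep3 (transl_tangent (nil_transl_inv P P1))
                    (transl_tangent (nil_transl_inv P P2))
                    (transl_tangent (nil_transl_inv P P3)).

End Nil.

From mathcomp Require Import all_boot all_order all_algebra.
From mathcomp Require Import ring.
Import Order.TTheory GRing.Theory Num.Theory.
Local Open Scope ring_scope.

(* Pulled back to E0, the three tangent vectors are linearly dependent iff
   their 3x3 determinant vanishes.  For the vertices E0, (a,b,c), (d,e,f) this
   determinant is affine in the z-coordinate of P, with leading coefficient
   -(ae - bd), so when ae - bd <> 0 its zero set is the graph of the stated
   function of x and y. *)

Section Det3.
Context {R : realFieldType}.

Definition vec3 (u : R * R * R) : 'rV[R]_3 := \row_j [:: u.1.1; u.1.2; u.2]`_j.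

Definition mx3 (u v w : R * R * R) : 'M[R]_3 := \matrix_i vec3 [:: u; v; w]`_i.

Definition det3 (u v w : R * R * R) : R :=
  u.1.1 * (v.1.2 * w.2 - v.2 * w.1.2) - u.1.2 * (v.1.1 * w.2 - v.2 * w.1.1)
  + u.2 * (v.1.1 * w.1.2 - v.1.2 * w.1.1).

Lemma det_mx3 u v w : \det (mx3 u v w) = det3 u v w.
Proof.
rewrite (expand_det_row _ 0) !big_ord_recl big_ord0 /cofactor.
rewrite !(expand_det_row _ 0) !big_ord_recl !big_ord0 /cofactor.
by rewrite !det_mx11 !mxE /= /det3; ring.
Qed.

Lemma vec3K (r : 'rV[R]_3) : vec3 (r 0 0, r 0 1, r 0 2) = r.
Proof.
by apply/rowP => -[[|[|[|]]] // ?]; rewrite !mxE /=; congr (r 0 _); apply: val_inj.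
Qed.

Lemma vec3_eq0 p : (vec3 p == 0) = (p == (0, 0, 0)).
Proof.
case: p => [[x y] z]; apply/eqP/eqP => [/rowP h | [-> -> ->]].
  by have := h 0; have := h 1; have := h 2; rewrite !mxE /= => -> -> ->.
by apply/rowP => -[[|[|[|]]] // ?]; rewrite !mxE.
Qed.

Lemma mul_vec3_mx3 l u v w :
  vec3 l *m mx3 u v w =
  vec3 (l.1.1 * u.1.1 + l.1.2 * v.1.1 + l.2 * w.1.1,
        l.1.1 * u.1.2 + l.1.2 * v.1.2 + l.2 * w.1.2,
        l.1.1 * u.2 + l.1.2 * v.2 + l.2 * w.2).
Proof.
apply/rowP => j; rewrite !mxE !big_ord_recl big_ord0 !mxE addr0 /=.
by case: j => -[|[|[|]]] // ?; rewrite /= addrA.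
Qed.

Lemma lin_dep3P u v w : lin_dep3 u v w <-> det3 u v w = 0.
Proof.
rewrite -det_mx3; split.
  case=> l1 [l2 [l3 [l_neq0 [h1 [h2 h3]]]]]; apply/eqP/det0P.
  exists (vec3 (l1, l2, l3)); first by rewrite vec3_eq0; apply/eqP.
  by rewrite mul_vec3_mx3 /= h1 h2 h3; apply/eqP; rewrite vec3_eq0.
move/eqP/det0P => [r r_neq0 r_mx3_eq0].
exists (r 0 0), (r 0 1), (r 0 2).
move: r_mx3_eq0; rewrite -[r in r *m _]vec3K mul_vec3_mx3 => /eqP.
rewrite vec3_eq0 /= => /eqP[h1 h2 h3].
by split=> //; apply/eqP; rewrite -vec3_eq0 vec3K.
Qed.

Lemma det3_transl_tangents (a b c d e f : R) (P : nilpt R) :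
  2 * det3 (transl_tangent (nil_transl_inv P (0, 0, 0)))
           (transl_tangent (nil_transl_inv P (a, b, c)))
           (transl_tangent (nil_transl_inv P (d, e, f))) =
  (b * d * e - a * b * e + 2 * c * e - 2 * b * f) * px P
  + (a * b * d - a * d * e + 2 * a * f - 2 * c * d) * py P
  + (a * e - b * d) * (px P * py P - 2 * pz P).
Proof. by rewrite /det3 /transl_tangent /nil_transl_inv /px /py /pz /=; field. Qed.

End Det3.

Theorem lemma4p6 (R : realFieldType) (a b c d e f : R) :
  a * e - b * d != 0 ->
  forall P : nilpt R,
    transl_tri_surface (0, 0, 0) (a, b, c) (d, e, f) P <->
    pz P = px P * py P / 2
           + (b * d * e - a * b * e + 2 * c * e - 2 * b * f)
               / (2 * (a * e - b * d)) * px P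
           + (a * b * d - a * d * e + 2 * a * f - 2 * c * d)
               / (2 * (a * e - b * d)) * py P.
Proof.
move=> D_neq0 P; rewrite /transl_tri_surface lin_dep3P.
have twoD_neq0 : 2 * (a * e - b * d) != 0 by rewrite mulf_neq0 ?pnatr_eq0.
set det := det3 _ _ _; set z := (RHS in _ <-> _ = RHS).
have z_sub : z - pz P = 2 * det / (2 * (a * e - b * d)).
  by rewrite /det det3_transl_tangents /z; field.
split=> [det0 | z_eq]; apply/eqP.
  by rewrite eq_sym -subr_eq0 z_sub det0 mulr0 mul0r.
move: z_sub; rewrite z_eq subrr => /esym/eqP.
by rewrite mulf_eq0 invr_eq0 (negbTE twoD_neq0) orbF mulf_eq0 pnatr_eq0.
Qed.
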